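(* For every shrub $P$ on a finite set $I$, the rational function $f_P$ is, when written as the displayed quotient of products of linear forms, in lowest terms, without repeated factors, and a product of linear factors (i.e. after cancellation nothing cancels: the linear forms appearing in numerator and denominator are pairwise distinct).
   Context: A shrub $P$ on a finite set $I$ is a set $E$ of edges (unordered pairs of distinct elements of $I$) with a height function $h_P:I\to\mathbb{N}$; $j$ covers $i$ if $\{i,j\}\in E$ and $h_P(j)=h_P(i)+1$. Axioms: (1) edges join vertices whose heights differ by $1$; (2) every vertex of positive height covers some vertex; (3) no four distinct $a,b,c,d$ with $a$ covering $b$ and $c$, $c$ covering $d$, $\{b,d\}\notin E$; (4) no five distinct $a,b,c,d,e$ with $a$ covering $c,d$, $b$ covering $d,e$, $\{a,e\}\notin E$, $\{b,c\}\notin E$. A vertex is ramified if it covers at least two distinct vertices; two ramified vertices are equivalent if they cover the same set of vertices. $\operatorname{Ram}(P)$ is the set of equivalence classes of ramified vertices; for $r\in\operatorname{Ram}(P)$, $r^-$ is the common set of vertices covered by the elements of $r$. For $S\subseteq I$, the upper ideal $\langle S\rangle_P$ generated by $S$ is the set of $j\in I$ such that every descending path $j=j_0,j_1,\dots,j_m$ (each $j_t$ covering $j_{t+1}$) ending at a vertex of height $0$ contains an element of $S$. For $J\subseteq I$ whose complement is a shrub (for the restricted edges and height), $P\setminus J$ denotes that restricted shrub; $P\setminus\langle r\rangle_P$ is such a shrub. Write $u[S]=\sum_{k\in S}u_k$. Define $$f_P=\frac{1}{\prod_{i\in I}u[\langle\{i\}\rangle_P]}\prod_{r\in\operatorname{Ram}(P)}\frac{u[\langle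 r^-\rangle_{P\setminus\langle r\rangle_P}]}{u[\langle r^-\rangle_P]}\in\mathbb{Q}(u_i:i\in I).$$ *)

From mathcomp Require Import all_boot.
From mathcomp Require Import boolp.
Set Implicit Arguments.
Unset Strict Implicit.
Unset Printing Implicit Defensive.

Section Shrubs.
Variable I : finType.

(* A shrub is described by an edge relation [e] (a symmetric irreflexive
   relation = set of unordered pairs of distinct elements) and a height
   function [h], restricted to a vertex set [D : {set I}].  Working
   relative to [D] lets us speak of the restricted shrub P \ J
   (take D := D :\: J, with the restricted edges and height). *)

Definition covers (D : {set I}) (e : rel I) (h : I -> nat) (j i : I) : bool :=
  [&& j \in D, i \in D, e i j & h j == (h i).+1].

Definition is_shrub (D : {set I}) (e : rel I) (h : I -> nat) : Prop :=
  (forall i j, e i j = e j i) /\ (forall i, ~~ e i i) /\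
  (forall i j, i \in D -> j \in D -> e i j -> h j = (h i).+1 \/ h i = (h j).+1) /\
  (* (2) *)
  (forall i, i \in D -> 0 < h i -> exists j, covers D e h i j) /\
  ~ (exists a b c d, uniq [:: a; b; c; d] /\ covers D e h a b /\
        covers D e h a c /\ covers D e h c d /\ ~~ e b d) /\
  ~ (exists a b c d x, uniq [:: a; b; c; d; x] /\ covers D e h a c /\
        covers D e h a d /\ covers D e h b d /\ covers D e h b x /\
        ~~ e a x /\ ~~ e b c).

Definition upper_ideal (D : {set I}) (e : rel I) (h : I -> nat) (S : {set I})
  : {set I} :=
  [set j in D | `[< forall p : seq I, path (covers D e h) j p ->
                      h (last j p) = 0 -> has (mem S) (j :: p) >]].

Definition covered_set (D : {set I}) (e : rel I) (h : I -> nat) (v : I)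
  : {set I} := [set i | covers D e h v i].

Definition ramified (D : {set I}) (e : rel I) (h : I -> nat) (v : I) : bool :=
  (v \in D) && [exists a, exists b, [&& a != b, covers D e h v a & covers D e h v b]].

Definition Ram (D : {set I}) (e : rel I) (h : I -> nat) : {set {set I}} :=
  [set [set w | ramified D e h w && (covered_set D e h w == covered_set D e h v)]
  | v in [set v | ramified D e h v]].

Definition rminus (D : {set I}) (e : rel I) (h : I -> nat) (r : {set I})
  : {set I} := [set i | [forall v in r, covers D e h v i]].

(* The sets S whose linear forms u[S] occur as factors in the displayed
   expression of f_P (P = shrub on D):
   denominator: u[<{i}>_P] (i in I), u[<r^->_P] (r in Ram P);
   numerator:   u[<r^->_{P \ <r>_P}] (r in Ram P). *)
Definition factor_sets (D : {set I}) (e : rel I) (h : I -> nat) : seq {set I} :=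
  [seq upper_ideal D e h [set i] | i <- enum D] ++
  [seq upper_ideal D e h (rminus D e h r) | r <- enum (Ram D e h)] ++
  [seq upper_ideal (D :\: upper_ideal D e h r) e h (rminus D e h r)
   | r <- enum (Ram D e h)].

End Shrubs.

From mathcomp Require Import all_boot.
From mathcomp Require Import boolp.

Set Implicit Arguments.
Unset Strict Implicit.
Unset Printing Implicit Defensive.

(* Only axiom (2) matters: in a shrub every vertex has a descending path to
   height 0, so a set S of vertices of one common height is exactly the set
   of lowest vertices of its upper ideal <S>.  Hence <S> determines S, and
   r^- determines the class r.  The singletons {i} and the sets r^- (which
   have at least two elements) are therefore all distinct, and so are the
   ideals built from them; the ideal of r^- in P \ <r>_P is still determined
   by r^- because P \ <r>_P again satisfies (2), while it differs from
   <r^->_P since the latter contains the elements of r.  Every factor set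
   contains its nonempty generator. *)

Section UpperIdeals.
Variables (I : finType) (e : rel I) (h : I -> nat).

Definition descending (D : {set I}) :=
  forall i, i \in D -> 0 < h i -> exists j, covers D e h i j.

Definition lowest (X : {set I}) : {set I} :=
  [set x in X | [forall y in X, h x <= h y]].

Lemma covers_height (D : {set I}) j i : covers D e h j i -> h j = (h i).+1.
Proof. by case/and4P=> _ _ _ /eqP. Qed.

Lemma covers_path_height_lt (D : {set I}) x p y :
  path (covers D e h) x p -> y \in p -> h y < h x.
Proof.
elim: p x => [//|z p IHp] x /= /andP[/covers_height hxz pz].
rewrite inE hxz ltnS => /predU1P[-> //|yp].
exact/ltnW/(IHp z pz).
Qed.

Lemma descending_path_to_ground (D : {set I}) x : descending D -> x \in D ->
  exists2 p, path (covers D e h) x p & h (last x p) = 0.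
Proof.
move=> dD; have [n] := ubnP (h x); elim: n x => // n IHn x hx xD.
have [hx0|hx_gt0] := posnP (h x); first by exists [::].
have [j cxj] := dD x xD hx_gt0.
have jD : j \in D by case/and4P: cxj.
have hj : h j < n by rewrite -ltnS -(covers_height cxj).
have [p pj lp] := IHn j hj jD.
by exists (j :: p); rewrite //= cxj.
Qed.

Lemma upper_ideal_subset (D S : {set I}) : upper_ideal D e h S \subset D.
Proof. by apply/subsetP => x; rewrite inE => /andP[]. Qed.

Lemma mem_upper_ideal (D S : {set I}) x : x \in D -> x \in S -> x \in upper_ideal D e h S.
Proof. by move=> xD xS; rewrite inE xD; apply/asboolP => p _ _ /=; rewrite xS. Qed.

Lemma upper_ideal_neq0 (D S : {set I}) x :
  x \in D -> x \in S -> upper_ideal D e h S != set0.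
Proof. by move=> xD xS; apply/set0Pn; exists x; apply: mem_upper_ideal. Qed.

Lemma upper_ideal_below (D S : {set I}) x : descending D -> x \in upper_ideal D e h S ->
  x \in S \/ exists2 s, s \in S & h s < h x.
Proof.
rewrite inE => dD /andP[xD /asboolP all_paths_hit].
have [p pp lp] := descending_path_to_ground dD xD.
have /orP[xS|/hasP[s sp sS]] := all_paths_hit p pp lp; [by left | right].
by exists s => //; apply: covers_path_height_lt pp sp.
Qed.

Lemma lowest_upper_ideal (D S : {set I}) : descending D -> S \subset D ->
  {in S &, forall a b, h a = h b} -> lowest (upper_ideal D e h S) = S.
Proof.
move=> dD /subsetP SD Sh; apply/setP => x; rewrite inE.
apply/andP/idP => [[xU /forall_inP x_lowest] | xS].
  have [//|[s sS hs]] := upper_ideal_below dD xU.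
  by have := x_lowest s (mem_upper_ideal (SD s sS) sS); rewrite leqNgt hs.
split; first exact: mem_upper_ideal (SD x xS) xS.
apply/forall_inP => y yU; have [yS|[s sS hs]] := upper_ideal_below dD yU.
  by rewrite (Sh x y xS yS).
by rewrite (Sh x s xS sS) ltnW.
Qed.

(* A vertex outside <S> covering only vertices of <S> would lie in <S>. *)
Lemma descending_setD_upper_ideal (D S : {set I}) :
  descending D -> descending (D :\: upper_ideal D e h S).
Proof.
move=> dD i /setDP[iD iU] hi_gt0.
have [/existsP[j cij]|] := boolP [exists j, covers (D :\: upper_ideal D e h S) e h i j].
  by exists j.
rewrite negb_exists => /forallP no_cover; case/negP: (iU); rewrite inE iD.
apply/asboolP => -[|j p] /=; first by move=> _ h0; rewrite h0 in hi_gt0.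
move=> /andP[cij pj] lj.
have /[!inE] /andP[_ /asboolP /(_ p pj lj) jp_hit] : j \in upper_ideal D e h S.
  apply: contraNT (no_cover j) => jU.
  by case/and4P: cij => _ jD eij hij; rewrite /covers !in_setD iU iD jU jD eij hij.
by rewrite /= in jp_hit; case/orP: jp_hit => ->; rewrite ?orbT.
Qed.

End UpperIdeals.

Section RamifiedClasses.
Variables (I : finType) (e : rel I) (h : I -> nat) (D : {set I}).

Definition ram_class (v : I) : {set I} :=
  [set w | ramified D e h w && (covered_set D e h w == covered_set D e h v)].

Lemma RamP r : reflect (exists2 v, ramified D e h v & r = ram_class v)
  (r \in Ram D e h).
Proof.
by apply: (iffP imsetP) => -[v vR ->]; exists v; rewrite ?inE in vR *.
Qed.

Lemma mem_ram_class v : ramified D e h v -> v \in ram_class v.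
Proof. by move=> vR; rewrite inE vR eqxx. Qed.

Lemma rminus_ram_class v :
  ramified D e h v -> rminus D e h (ram_class v) = covered_set D e h v.
Proof.
move=> vR; apply/setP => i; rewrite !inE.
apply/forall_inP/idP => [|cvi w /[!inE] /andP[_ /eqP cov_wv]].
  by move/(_ v (mem_ram_class vR)).
by have /[!inE] : i \in covered_set D e h w by rewrite cov_wv inE.
Qed.

Lemma Ram_rminus_inj : {in Ram D e h &, injective (rminus D e h)}.
Proof.
move=> _ _ /RamP[v vR ->] /RamP[v' vR' ->].
rewrite !rminus_ram_class // => cov_eq.
by apply/setP => w; rewrite !inE cov_eq.
Qed.

Lemma covers_rminus (r : {set I}) v a : v \in r -> a \in rminus D e h r -> covers D e h v a.
Proof. by rewrite inE => vr /forall_inP; apply. Qed.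

Lemma rminus_subset r : r \in Ram D e h -> rminus D e h r \subset D.
Proof.
case/RamP=> v vR ->; apply/subsetP => a.
by move/(covers_rminus (mem_ram_class vR))/and4P=> [].
Qed.

Lemma rminus_same_height r : r \in Ram D e h ->
  {in rminus D e h r &, forall a b, h a = h b}.
Proof.
case/RamP=> v vR -> a b ar br; apply: succn_inj.
have vr := mem_ram_class vR.
by rewrite -(covers_height (covers_rminus vr ar)) (covers_height (covers_rminus vr br)).
Qed.

Lemma rminus_two r : r \in Ram D e h ->
  exists a b, [/\ a != b, a \in rminus D e h r & b \in rminus D e h r].
Proof.
case/RamP=> v vR ->; rewrite rminus_ram_class //.
by case/andP: vR => _ /existsP[a /existsP[b /and3P[ab va vb]]]; exists a, b; rewrite !inE.
Qed.

Lemma rminus_neq_set1 r i : r \in Ram D e h -> rminus D e h r != [set i].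
Proof.
case/rminus_two=> a [b [ab ar br]]; apply: contra ab => /eqP rm_i.
by move: ar br; rewrite rm_i !inE => /eqP-> /eqP->.
Qed.

Hypothesis dD : descending e h D.

Lemma rminus_subset_setD r : r \in Ram D e h ->
  rminus D e h r \subset D :\: upper_ideal D e h r.
Proof.
move=> rR; apply/subsetP => a ar; rewrite in_setD (subsetP (rminus_subset rR) a ar) andbT.
apply/negP => /(upper_ideal_below dD) [ar'|[s sr]].
  by have /n_Sn := covers_height (covers_rminus ar' ar).
by rewrite (covers_height (covers_rminus sr ar)) ltnNge leqnSn.
Qed.

(* The elements of r lie in <r^->_P but not in P \ <r>_P. *)
Lemma upper_ideal_rminus_neq_setD r : r \in Ram D e h ->
  upper_ideal D e h (rminus D e h r) !=
  upper_ideal (D :\: upper_ideal D e h r) e h (rminus D e h r).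
Proof.
move=> rR; have /RamP[v vR r_v] := rR; have vr : v \in r by rewrite r_v mem_ram_class.
have vD : v \in D by case/andP: vR.
apply/negP => /eqP ideal_eq.
have : v \in upper_ideal D e h (rminus D e h r).
  rewrite inE vD; apply/asboolP => -[|a p] /=.
    have [a [_ [_ ar _]]] := rminus_two rR.
    by rewrite (covers_height (covers_rminus vr ar)).
  by case/andP=> cva _ _; rewrite r_v rminus_ram_class // [a \in _]inE cva orbT.
rewrite ideal_eq => /(subsetP (upper_ideal_subset _ _ _ _)) /setDP[_].
by rewrite mem_upper_ideal.
Qed.

End RamifiedClasses.

Section FactorSets.
Variables (I : finType) (e : rel I) (h : I -> nat) (D : {set I}).
Hypothesis dD : descending e h D.

Lemma lowest_upper_ideal_set1 i :
  i \in D -> lowest h (upper_ideal D e h [set i]) = [set i].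
Proof.
move=> iD; apply: lowest_upper_ideal => //; first by rewrite sub1set.
by move=> a b /set1P-> /set1P->.
Qed.

Lemma lowest_upper_ideal_rminus r : r \in Ram D e h ->
  lowest h (upper_ideal D e h (rminus D e h r)) = rminus D e h r.
Proof.
by move=> rR; apply: lowest_upper_ideal; [|exact: rminus_subset|exact: rminus_same_height].
Qed.

Lemma lowest_upper_ideal_setD_rminus r : r \in Ram D e h ->
  lowest h (upper_ideal (D :\: upper_ideal D e h r) e h (rminus D e h r))
  = rminus D e h r.
Proof.
move=> rR; apply: lowest_upper_ideal; last exact: rminus_same_height.
  exact: descending_setD_upper_ideal.
exact: rminus_subset_setD.
Qed.

Lemma factor_sets_uniq : uniq (factor_sets D e h).
Proof.
have lowA := lowest_upper_ideal_set1; have lowB := lowest_upper_ideal_rminus.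
have lowC := lowest_upper_ideal_setD_rminus.
rewrite /factor_sets !cat_uniq !has_cat !negb_or; apply/and5P; split.
- rewrite map_inj_in_uniq ?enum_uniq // => i j; rewrite !mem_enum => iD jD ij.
  by apply/set1_inj; rewrite -lowA // ij lowA.
- apply/andP; split; apply/hasPn => X /mapP[r]; rewrite mem_enum => rR ->;
    apply/mapP => -[i]; rewrite mem_enum => iD /(congr1 (lowest h));
    rewrite ?lowB ?lowC // lowA // => /eqP; exact/negP/rminus_neq_set1.
- rewrite map_inj_in_uniq ?enum_uniq // => r r'; rewrite !mem_enum => rR rR' rr'.
  by apply: (Ram_rminus_inj rR rR'); rewrite -(lowB r) // rr' lowB.
- apply/hasPn => X /mapP[r]; rewrite mem_enum => rR ->.
  apply/mapP => -[r']; rewrite mem_enum => rR' ideal_eq.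
  have rr' : r = r'.
    by apply: (Ram_rminus_inj rR rR'); rewrite -(lowC r) // ideal_eq lowB.
  move: ideal_eq; rewrite -rr' => /esym/eqP.
  exact/negP/upper_ideal_rminus_neq_setD.
- rewrite map_inj_in_uniq ?enum_uniq // => r r'; rewrite !mem_enum => rR rR' rr'.
  by apply: (Ram_rminus_inj rR rR'); rewrite -(lowC r) // rr' lowC.
Qed.

Lemma set0_notin_factor_sets : set0 \notin factor_sets D e h.
Proof.
rewrite /factor_sets !mem_cat; apply/negP.
case/or3P=> /mapP[x]; rewrite mem_enum => xF /esym/eqP; apply/negP.
- exact: upper_ideal_neq0 xF (set11 x).
- have [a [_ [_ ar _]]] := rminus_two xF.
  exact: upper_ideal_neq0 (subsetP (rminus_subset xF) a ar) ar.
- have [a [_ [_ ar _]]] := rminus_two xF.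
  exact: upper_ideal_neq0 (subsetP (rminus_subset_setD dD xF) a ar) ar.
Qed.

End FactorSets.

Theorem mainTheorem11 (I : finType) (e : rel I) (h : I -> nat) :
  is_shrub [set: I] e h ->
  uniq (factor_sets [set: I] e h) /\ set0 \notin factor_sets [set: I] e h.
Proof.
case=> _ [_ [_ [dI _]]].
by split; [exact: factor_sets_uniq | exact: set0_notin_factor_sets].
Qed.
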